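(* Let $A$ be a finite set and let $X \subset A^{\mathbb Z}$ be a W-subshift. Then the set of periodic configurations of $X$ is dense in $X$.
   Context: A subshift of $A^{\mathbb Z}$ is a closed (for the product of discrete topologies) shift-invariant subset; a configuration is periodic if its orbit under the shift $(gx)(h)=x(h-g)$ is finite. $L(X)$ is the set of finite words (including the empty word) appearing as $x(i)x(i+1)\cdots x(j)$ ($i\le j$) in some $x\in X$; $|w|$ is word length. $X$ is a W-subshift if there is an integer $n_0\ge0$ such that for all $u,v\in L(X)$ there is $c\in L(X)$ with $|c|\le n_0$ and $ucv\in L(X)$. *)

From mathcomp Require Import all_boot.
From Stdlib Require Import ZArith.
Set Implicit Arguments. Unset Strict Implicit. Unset Printing Implicit Defensive.

Section Subshift.
Variable A : finType.

Definition config := Z -> A.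

Definition shift (g : Z) (x : config) : config := fun h => x (h - g)%Z.

(* basic open sets (cylinders) of the product of discrete topologies:
   configurations agreeing with x on the window [-n, n] *)
Definition agree_on (n : nat) (x y : config) : Prop :=
  forall h : Z, (- Z.of_nat n <= h <= Z.of_nat n)%Z -> x h = y h.

(* closed for the product topology: every point all of whose basic
   neighbourhoods meet X lies in X *)
Definition closed_set (X : config -> Prop) : Prop :=
  forall x : config, (forall n : nat, exists y, X y /\ agree_on n x y) -> X x.

Definition shift_invariant (X : config -> Prop) : Prop :=
  forall g x, X x -> X (shift g x).

Definition subshift (X : config -> Prop) : Prop :=
  closed_set X /\ shift_invariant X.

Definition periodic (x : config) : Prop :=
  exists s : list config, forall g : Z, List.In (shift g x) s.

Definition window (x : config) (i : Z) (k : nat) : seq A :=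
  map (fun j : nat => x (i + Z.of_nat j)%Z) (iota 0 k).

(* language L(X), including the empty word *)
Definition lang (X : config -> Prop) (w : seq A) : Prop :=
  exists x i, X x /\ window x i (size w) = w.

Definition W_subshift (X : config -> Prop) : Prop :=
  subshift X /\
  exists n0 : nat, forall u v : seq A, lang X u -> lang X v ->
    exists c : seq A, size c <= n0 /\ lang X (u ++ c ++ v).

Definition dense_in (P X : config -> Prop) : Prop :=
  forall x, X x -> forall n : nat, exists y, X y /\ P y /\ agree_on n x y.

End Subshift.

(* A word s of the language extends to a word p = s r all of whose powers lie
   in the language; the configuration repeating p then has all its windows in
   L(X), hence lies in X, is periodic, and agrees with any x around 0 once s is
   a central window of x.  To find r, glue s to itself with a short connector c.
   If every (s c)^m s is in the language, take r = c.  Otherwise some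
   t = (s c)^m s is in the language while (s c)^(m+1) s is not; every connector
   of t is a connector of s, but c is no longer one, so we recurse on t with
   fewer available connectors, of which there are finitely many. *)
From Pilot Require Import Defs.
From mathcomp Require Import all_boot.
From Stdlib Require Import ZArith.
From mathcomp Require Import zify.
From Stdlib Require Import Lia Classical FunctionalExtensionality.

Set Implicit Arguments. Unset Strict Implicit. Unset Printing Implicit Defensive.

Fixpoint wpow (A : Type) (p : seq A) (j : nat) : seq A :=
  if j is j'.+1 then p ++ wpow p j' else [::].

Section WordPowers.
Variable A : Type.
Implicit Types p s c : seq A.

Lemma wpowSr p j : wpow p j.+1 = wpow p j ++ p.
Proof. by elim: j => [|j IHj] /=; rewrite ?cats0 // -catA -IHj. Qed.

Lemma size_wpow p j : size (wpow p j) = j * size p.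
Proof. by elim: j => [|j IHj] //=; rewrite size_cat IHj mulSn. Qed.

Lemma nth_wpow a0 p j m :
  m < j * size p -> nth a0 (wpow p j) m = nth a0 p (m %% size p).
Proof.
elim: j m => [|j IHj] m //= m_lt; rewrite nth_cat.
case: ltnP => [m_lt_p|p_le_m]; first by rewrite modn_small.
by rewrite IHj; [rewrite -{2}(subnK p_le_m) modnDr | move: m_lt; rewrite mulSn; lia].
Qed.

Lemma wpow_cat_prefix s c m : exists T, wpow (s ++ c) m ++ s = s ++ T.
Proof.
case: m => [|m] /=; first by exists [::]; rewrite cats0.
by exists (c ++ wpow (s ++ c) m ++ s); rewrite -!catA.
Qed.

End WordPowers.

Section PowerExtension.
Variable A : eqType.
Variable L : seq A -> Prop.
Hypothesis L_factor : forall u v z, L (u ++ v ++ z) -> L v.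
Variable n0 : nat.
Hypothesis L_connect :
  forall u v, L u -> L v -> exists c, size c <= n0 /\ L (u ++ c ++ v).
Implicit Types s c : seq A.

Lemma L_prefix u v : L (u ++ v) -> L u.
Proof. by move=> Luv; apply: (@L_factor [::] u v). Qed.

Lemma connector_wpow_sandwich s c c' m :
  let t := wpow (s ++ c) m ++ s in L (t ++ c' ++ t) -> L (s ++ c' ++ s).
Proof.
rewrite /=; have [T t_def] := wpow_cat_prefix s c m.
rewrite {2}t_def -!catA => Lt.
by apply: (@L_factor (wpow (s ++ c) m) _ T); rewrite -!catA.
Qed.

Lemma self_connector_wpow s c m :
  let t := wpow (s ++ c) m ++ s in L (t ++ c ++ t) -> L (wpow (s ++ c) m.+1 ++ s).
Proof.
move=> t; rewrite wpowSr /t; have [T t_def] := wpow_cat_prefix s c m.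
rewrite {2}t_def -!catA => Lt.
by apply: (@L_prefix _ T); rewrite -!catA.
Qed.

Lemma power_extension_in k D s :
  size D <= k -> L s -> (forall c, size c <= n0 -> L (s ++ c ++ s) -> c \in D) ->
  exists r, forall j, L (wpow (s ++ r) j).
Proof.
elim: k D s => [|k IHk] D s D_le Ls D_conn;
  have [c [c_le Lscs]] := L_connect Ls Ls; have cD := D_conn c c_le Lscs.
  by move: D_le cD; rewrite leqn0 => /nilP ->.
have [[m [Lt not_Lt']] | no_drop] :=
  classic (exists m, L (wpow (s ++ c) m ++ s) /\ ~ L (wpow (s ++ c) m.+1 ++ s)).
  set t := wpow (s ++ c) m ++ s in Lt.
  have [T t_def] := wpow_cat_prefix s c m.
  have D'_le : size (filter (predC1 c) D) <= k.
    have : 0 < count_mem c D by rewrite -has_count has_pred1.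
    have := count_predC (pred1 c) D; rewrite size_filter.
    by rewrite (_ : count (predC (pred1 c)) D = count (predC1 c) D) //; lia.
  have t_conn c' : size c' <= n0 -> L (t ++ c' ++ t) -> c' \in filter (predC1 c) D.
    move=> c'_le Ltct; have Lsc's := connector_wpow_sandwich Ltct.
    rewrite mem_filter D_conn // andbT; apply/eqP => c'c; rewrite c'c in Ltct.
    exact: not_Lt' (self_connector_wpow Ltct).
  have [r Lr] := IHk _ t D'_le Lt t_conn.
  by exists (T ++ r); rewrite catA -t_def.
have Lsc m : L (wpow (s ++ c) m ++ s).
  elim: m => [|m IHm] //; apply: NNPP => not_Lm'.
  by apply: no_drop; exists m.
by exists c => j; apply: L_prefix (Lsc j).
Qed.

End PowerExtension.

Fixpoint words_upto (A : finType) (n : nat) : seq (seq A) :=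
  if n is n'.+1 then [::] :: [seq a :: u | a <- enum A, u <- words_upto A n']
  else [:: [::]].

Lemma words_uptoP (A : finType) n (c : seq A) : size c <= n -> c \in words_upto A n.
Proof.
elim: n c => [|n IHn] [|a u] //= u_le.
by rewrite in_cons allpairs_f ?orbT ?mem_enum ?IHn.
Qed.

Lemma power_extension (A : finType) (L : seq A -> Prop) (n0 : nat) :
  (forall u v z, L (u ++ v ++ z) -> L v) ->
  (forall u v, L u -> L v -> exists c, size c <= n0 /\ L (u ++ c ++ v)) ->
  forall s, L s -> exists r, forall j, L (wpow (s ++ r) j).
Proof.
move=> L_factor L_connect s Ls.
apply: (power_extension_in L_factor L_connect (leqnn (size (words_upto A n0))) Ls).
by move=> c c_le _; apply: words_uptoP.
Qed.

Lemma Nat2Z_modn m d : 0 < d -> Z.of_nat (m %% d) = (Z.of_nat m mod Z.of_nat d)%Z.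
Proof.
move=> d_gt0; rewrite -Nat2Z.inj_mod; congr Z.of_nat.
apply: (Nat.mod_unique _ _ (m %/ d)); first by have := ltn_pmod m d_gt0; lia.
by have := divn_eq m d; lia.
Qed.

Section Windows.
Variable A : finType.
Implicit Types (x y : config A) (X : config A -> Prop).

Lemma size_window x i k : size (window x i k) = k.
Proof. by rewrite size_map size_iota. Qed.

Lemma nth_window a0 x i k t : t < k -> nth a0 (window x i k) t = x (i + Z.of_nat t)%Z.
Proof. by move=> t_lt; rewrite (nth_map 0) ?size_iota // nth_iota. Qed.

Lemma window_cat x i a b :
  window x i (a + b) = window x i a ++ window x (i + Z.of_nat a) b.
Proof.
rewrite /window iotaD map_cat; congr (_ ++ _).
by rewrite add0n -{1}(addn0 a) iotaDl -map_comp; apply: eq_map => j /=; congr x; lia.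
Qed.

Lemma lang_factor X u v z : lang X (u ++ v ++ z) -> lang X v.
Proof.
move=> [x [i [Xx x_uvz]]]; exists x, (i + Z.of_nat (size u))%Z; split => //.
move: x_uvz; rewrite !size_cat !window_cat.
move=> /(congr1 (drop (size u))); rewrite !drop_size_cat ?size_window //.
by move=> /(congr1 (take (size v))); rewrite !take_size_cat ?size_window.
Qed.

Lemma mem_subshift_windows X y :
  subshift X -> (forall i k, lang X (window y i k)) -> X y.
Proof.
move=> [X_closed X_shift] y_win; apply: X_closed => N.
have [z [i [Xz z_win]]] := y_win (- Z.of_nat N)%Z (N + N).+1.
exists (Defs.shift (- i - Z.of_nat N) z); split; first exact: X_shift.
move=> h h_in; rewrite size_window in z_win.
have t_lt : Z.to_nat (h + Z.of_nat N) < (N + N).+1 by lia.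
have := congr1 (fun w => nth (y 0%Z) w (Z.to_nat (h + Z.of_nat N))) z_win.
rewrite /= !nth_window // /Defs.shift => z_y.
have -> : (h - (- i - Z.of_nat N) = i + Z.of_nat (Z.to_nat (h + Z.of_nat N)))%Z by lia.
by rewrite z_y; congr y; lia.
Qed.

Lemma periodic_mod (f : Z -> A) (P o : Z) :
  (0 < P)%Z -> periodic (fun h => f ((h + o) mod P)%Z).
Proof.
move=> P_gt0.
exists (List.map (fun k => Defs.shift (Z.of_nat k) (fun h => f ((h + o) mod P)%Z))
                 (List.seq 0 (Z.to_nat P))) => g.
have g_mod := Z.mod_pos_bound g P P_gt0.
apply/List.in_map_iff; exists (Z.to_nat (g mod P)); split; last first.
  by apply/List.in_seq; lia.
apply: functional_extensionality => h; rewrite /Defs.shift Z2Nat.id; last by lia.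
rewrite (Z.mod_eq g P); last by lia.
have -> : (h - (g - P * (g / P)) + o = h - g + o + g / P * P)%Z by lia.
by rewrite Z_mod_plus_full.
Qed.

Definition cyclic_config (a0 : A) (p : seq A) (o : Z) : config A :=
  fun h => nth a0 p (Z.to_nat ((h + o) mod Z.of_nat (size p))).

Lemma periodic_cyclic_config a0 p o : 0 < size p -> periodic (cyclic_config a0 p o).
Proof.
by move=> p_gt0; apply: (periodic_mod (fun z => nth a0 p (Z.to_nat z))); lia.
Qed.

Lemma cyclic_config_small a0 p o h :
  (0 <= h + o < Z.of_nat (size p))%Z ->
  cyclic_config a0 p o h = nth a0 p (Z.to_nat (h + o)).
Proof. by move=> h_in; rewrite /cyclic_config Z.mod_small. Qed.

Lemma window_cyclic_config a0 p o i k : 0 < size p ->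
  exists u v, wpow p k.+1 = u ++ window (cyclic_config a0 p o) i k ++ v.
Proof.
move=> p_gt0; have P_gt0 : (0 < Z.of_nat (size p))%Z by lia.
have r_mod := Z.mod_pos_bound (i + o) _ P_gt0.
set r := Z.to_nat ((i + o) mod Z.of_nat (size p)) in r_mod *.
have r_lt : r < size p by lia.
have long_pow : r + k <= size (wpow p k.+1).
  by rewrite size_wpow mulSn leq_add ?(ltnW r_lt) ?leq_pmulr.
exists (take r (wpow p k.+1)), (drop k (drop r (wpow p k.+1))).
rewrite -{1}(cat_take_drop r (wpow p k.+1)) -{1}(cat_take_drop k (drop r _)).
congr (_ ++ _ ++ _); apply: (eq_from_nth (x0 := a0)).
  by rewrite size_window size_takel // size_drop; lia.
move=> t; rewrite size_takel => [t_lt|]; last by rewrite size_drop; lia.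
rewrite nth_take // nth_drop nth_wpow; last by rewrite -size_wpow; lia.
rewrite nth_window //; congr nth; apply: Nat2Z.inj.
have t_mod := Z.mod_pos_bound (i + Z.of_nat t + o) _ P_gt0.
rewrite Nat2Z_modn // Z2Nat.id; last by lia.
rewrite Nat2Z.inj_add /r Z2Nat.id; last by lia.
by rewrite Zplus_mod_idemp_l; congr Z.modulo; lia.
Qed.

End Windows.

Theorem theorem5p1 (A : finType) (X : config A -> Prop) :
  W_subshift X -> dense_in (fun y => periodic y) X.
Proof.
move=> [X_sub [n0 X_connect]] x Xx n.
set s := window x (- Z.of_nat n) (n + n).+1.
have Ls : lang X s by exists x, (- Z.of_nat n)%Z; rewrite size_window.
have [r Lpow] := power_extension (@lang_factor A X) X_connect Ls.
have p_ge : (n + n).+1 <= size (s ++ r) by rewrite size_cat size_window leq_addr.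
have p_gt0 : 0 < size (s ++ r) := leq_ltn_trans (leq0n _) p_ge.
exists (cyclic_config (x 0%Z) (s ++ r) (Z.of_nat n)); split; [|split].
- apply: mem_subshift_windows => // i k.
  have [u [v pow_def]] := window_cyclic_config (x 0%Z) (Z.of_nat n) i k p_gt0.
  by apply: (@lang_factor A X u _ v); rewrite -pow_def.
- exact: periodic_cyclic_config.
- move=> h h_in; rewrite cyclic_config_small; last by lia.
  rewrite nth_cat size_window ifT; last by lia.
  by rewrite nth_window; [congr x; lia | lia].
Qed.
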